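(* Let $K$ be a field and let $R\in\mathfrak R_K$ be of Loewy length $\sigma+1$ and top layer dimension $n$. Then there is a $K$-algebra direct product decomposition $R=R_0\boxplus\cdots\boxplus R_{n-1}$ where for each $i<n$, $R_i\in\mathfrak R_K$ has Loewy length $\sigma+1$ and top layer dimension $1$.
   Context: Socle sequence of a ring: $S_0=0$, $S_{\alpha+1}/S_\alpha=\mathrm{Soc}(R/S_\alpha)$, unions at limits; semiartinian with Loewy length $\sigma+1$ means $S_{\sigma+1}=R$ and $S_\sigma\neq R$; layers $L_\alpha=S_{\alpha+1}/S_\alpha$. $K^{(\lambda)}$ is the direct sum of $\lambda$ copies of $K$ as a $K$-algebra without unit. $\mathfrak R_K$ is the class of commutative von Neumann regular semiartinian $K$-algebras $R$ of Loewy length $\sigma+1$ such that for each $\alpha\le\sigma$ there is a cardinal $\lambda_\alpha>0$ and a $K$-linear isomorphism of $K$-algebras without unit $L_\alpha\cong K^{(\lambda_\alpha)}$; the finite number $\lambda_\sigma$ is the top layer dimension. $\boxplus$ denotes ring direct product. *)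

From Stdlib Require Lists.List.
From HB Require Import structures.
From mathcomp Require Import all_boot all_order all_algebra.
Set Implicit Arguments. Unset Strict Implicit. Unset Printing Implicit Defensive.
Import GRing.Theory.
Local Open Scope ring_scope.

Section RK.
Variables (K : fieldType) (R : comAlgType K).

Definition subI (I J : R -> Prop) := forall x, I x -> J x.

Definition is_ideal (I : R -> Prop) :=
  [/\ I 0, (forall x y, I x -> I y -> I (x + y)) & (forall r x, I x -> I (r * x))].

(* J covers I: J/I is a minimal (nonzero) ideal of R/I. *)
Definition covers (I J : R -> Prop) :=
  [/\ is_ideal J, subI I J, ~ subI J I &
      forall M, is_ideal M -> subI I M -> subI M J -> subI M I \/ subI J M].

(* soc_over I = preimage in R of Soc(R/I): the ideal generated by I and all
   ideals J such that J/I is a minimal ideal of R/I. *)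
Definition soc_over (I : R -> Prop) : R -> Prop := fun x =>
  forall M, is_ideal M -> subI I M -> (forall J, covers I J -> subI J M) -> M x.

Definition zeroI : R -> Prop := fun x => x = 0.
Definition fullI : R -> Prop := fun _ => True.

(* The members of the socle sequence (S_alpha)_alpha: the least family
   containing 0, closed under S |-> soc_over S and under unions of
   nonempty subfamilies (limit stages). *)
Inductive Lsoc : (R -> Prop) -> Prop :=
| Lsoc0 : Lsoc zeroI
| LsocS I : Lsoc I -> Lsoc (soc_over I)
| LsocL (F : (R -> Prop) -> Prop) :
    (exists I, F I) -> (forall I, F I -> Lsoc I) ->
    Lsoc (fun x => exists I, F I /\ I x).

(* The layer soc_over I / I is isomorphic, as a K-algebra without unit and
   K-linearly, to K^(X) (finitely supported functions X -> K, pointwise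
   operations); phi restricted to soc_over I is the quotient map composed
   with that isomorphism. *)
Definition fin_supp (X : Type) (g : X -> K) :=
  exists s : list X, forall t, g t <> 0 -> Stdlib.Lists.List.In t s.

Definition layer_iso (I : R -> Prop) (X : Type) :=
  exists phi : R -> X -> K,
  [/\ (forall a x y, soc_over I x -> soc_over I y ->
         phi (a *: x + y) = (fun t => a * phi x t + phi y t)),
      (forall x y, soc_over I x -> soc_over I y ->
         phi (x * y) = (fun t => phi x t * phi y t)),
      (forall x, soc_over I x -> fin_supp (phi x)),
      (forall g, fin_supp g -> exists x, soc_over I x /\ phi x = g) &
      (forall x, soc_over I x -> (phi x = (fun _ => 0) <-> I x))].

Definition vN_regular := forall x : R, exists y, x = x * y * x.

Definition in_RK :=
  [/\ vN_regular,
      (* semiartinian of successor Loewy length sigma+1: S_sigma <> R = S_(sigma+1) *)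
      exists I, [/\ Lsoc I, ~ subI fullI I & subI fullI (soc_over I)] &
      (* every layer L_alpha (alpha <= sigma, i.e. S_alpha <> R) is K^(lambda_alpha), lambda_alpha > 0 *)
      forall I, Lsoc I -> ~ subI fullI I ->
        exists (X : Type) (_ : X), layer_iso I X].

(* top layer dimension n: L_sigma = R/S_sigma is isomorphic to K^n *)
Definition top_dim (n : nat) :=
  exists I, [/\ Lsoc I, ~ subI fullI I, subI fullI (soc_over I) &
                layer_iso I 'I_n].

End RK.

(* Same Loewy length: the socle chains {S_alpha : alpha <= sigma+1}, ordered
   by inclusion, are order-isomorphic. *)
Definition same_loewy (K : fieldType) (R R' : comAlgType K) :=
  exists f : (R -> Prop) -> (R' -> Prop),
  [/\ (forall I, Lsoc I -> Lsoc (f I)),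
      (forall J, Lsoc J -> exists I, Lsoc I /\ forall x, f I x <-> J x) &
      (forall I J, Lsoc I -> Lsoc J -> (subI I J <-> subI (f I) (f J)))].

From HB Require Import structures.
From mathcomp Require Import all_boot all_order all_algebra.
From Stdlib Require Import Classical ClassicalEpsilon FunctionalExtensionality PropExtensionality.
From mathcomp Require Import ring.
Set Implicit Arguments. Unset Strict Implicit. Unset Printing Implicit Defensive.
Import GRing.Theory.
Local Open Scope ring_scope.

(* Lift the coordinate idempotents of the top layer R / S_sigma = K^n to
   orthogonal idempotents e_i of R with sum 1, which von Neumann regularity
   allows, so that R is the product of the corners R e_i.  Restricting ideals
   to a corner commutes with taking socles, so it maps the socle sequence of R
   onto that of R e_i, and the layers of R e_i are the parts of the layers of
   R on which e_i acts as the identity.  As e_i is not in S_sigma and the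
   socle of every R / S_alpha is essential, e_i acts nontrivially on every
   layer; hence restriction is an isomorphism of socle chains,
   all layers of R e_i are nonzero, and its top layer is K. *)

Lemma pred_ext (T : Type) (P Q : T -> Prop) : (forall x, P x <-> Q x) -> P = Q.
Proof. by move=> PQ; apply: functional_extensionality => x; apply: propositional_extensionality. Qed.

Lemma pred_neq0 (X : Type) (K : fieldType) (g : X -> K) :
  g <> (fun _ => 0) -> exists t, g t <> 0.
Proof.
move=> g_neq0; apply: NNPP => g0; apply: g_neq0; apply: functional_extensionality => t.
by apply: NNPP => gt_neq0; apply: g0; exists t.
Qed.

Section Ideals.
Variables (K : fieldType) (R : comAlgType K).
Implicit Types (I J M : R -> Prop) (a : K) (r x y : R).

Section IdealTheory.
Variables (I : R -> Prop) (HI : is_ideal I).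
Lemma ideal0 : I 0. Proof. by case: HI. Qed.
Lemma idealD x y : I x -> I y -> I (x + y). Proof. by case: HI => _ + _; apply. Qed.
Lemma idealMl r x : I x -> I (r * x). Proof. by case: HI => _ _; apply. Qed.
Lemma idealMr r x : I x -> I (x * r). Proof. by rewrite mulrC; apply: idealMl. Qed.
Lemma idealZ a x : I x -> I (a *: x).
Proof. by move=> Ix; rewrite -[x]mul1r scalerAl; apply: idealMl. Qed.
Lemma idealB x y : I x -> I y -> I (x - y).
Proof. by move=> Ix Iy; rewrite -scaleN1r; apply: idealD => //; apply: idealZ. Qed.
End IdealTheory.

Lemma ideal_preim (R' : comAlgType K) (f : R' -> R) I :
  f 0 = 0 -> {morph f : x y / x + y} -> {morph f : x y / x * y} ->
  is_ideal I -> is_ideal (fun x' : R' => I (f x')).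
Proof.
move=> f0 fD fM HI; split=> [|x y Ix Iy|r x Ix]; rewrite ?f0 ?fD ?fM.
- exact: ideal0.
- exact: idealD.
- exact: idealMl.
Qed.

Definition sumI I J : R -> Prop := fun x => exists i j, [/\ I i, J j & x = i + j].

Definition mulI J (c : R) : R -> Prop := fun x => exists j, J j /\ x = j * c.

Lemma sumI_ideal I J : is_ideal I -> is_ideal J -> is_ideal (sumI I J).
Proof.
move=> HI HJ; split.
- by exists 0, 0; rewrite addr0; split => //; apply: ideal0.
- move=> _ _ [i [j [Ii Jj ->]]] [i' [j' [Ii' Jj' ->]]].
  by exists (i + i'), (j + j'); rewrite addrACA; split => //; apply: idealD.
- move=> r _ [i [j [Ii Jj ->]]].
  by exists (r * i), (r * j); rewrite mulrDr; split => //; apply: idealMl.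
Qed.

Lemma sumIl I J : is_ideal J -> subI I (sumI I J).
Proof. by move=> HJ x Ix; exists x, 0; rewrite addr0; split => //; apply: ideal0. Qed.

Lemma sumIr I J : is_ideal I -> subI J (sumI I J).
Proof. by move=> HI x Jx; exists 0, x; rewrite add0r; split => //; apply: ideal0. Qed.

Lemma sumI_sub I J M : is_ideal M -> subI I M -> subI J M -> subI (sumI I J) M.
Proof. by move=> HM IM JM _ [i [j [Ii Jj ->]]]; apply: (idealD HM); [apply: IM | apply: JM]. Qed.

Lemma mulI_ideal J c : is_ideal J -> is_ideal (mulI J c).
Proof.
move=> HJ; split.
- by exists 0; rewrite mul0r; split => //; apply: ideal0.
- move=> _ _ [j [Jj ->]] [j' [Jj' ->]].
  by exists (j + j'); rewrite mulrDl; split => //; apply: idealD.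
- move=> r _ [j [Jj ->]].
  by exists (r * j); rewrite mulrA; split => //; apply: idealMl.
Qed.

Lemma fullI_ideal : is_ideal (@fullI K R).
Proof. by []. Qed.

End Ideals.

Section SocleChain.
Variables (K : fieldType) (R : comAlgType K).
Implicit Types I J c x : R -> Prop.

Lemma subI_anti I J : subI I J -> subI J I -> I = J.
Proof. by move=> IJ JI; apply: pred_ext => x; split; [apply: IJ | apply: JI]. Qed.

Lemma soc_over_ideal I : is_ideal (soc_over I).
Proof.
split=> [M [] //|x y Sx Sy M HM IM covM|r x Sx M HM IM covM].
- by apply: (idealD HM); [apply: Sx | apply: Sy].
- by apply: (idealMl HM); apply: Sx.
Qed.

Lemma sub_soc_over I : subI I (soc_over I).
Proof. by move=> x Ix M _ IM _; apply: IM. Qed.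

Lemma covers_sub_soc_over I J : covers I J -> subI J (soc_over I).
Proof. by move=> covIJ x Jx M _ _ covM; apply: (covM J covIJ). Qed.

Lemma Lsoc_0 I : Lsoc I -> I 0.
Proof.
elim=> [//|J _ _|F [J FJ] _ IH]; first exact: (ideal0 (soc_over_ideal J)).
by exists J; split => //; apply: IH.
Qed.

(* The members of the socle sequence form a chain: the argument is the one
   proving that towers are chains in the Bourbaki-Witt theorem. *)
Let extreme c := forall x, Lsoc x -> subI x c -> ~ subI c x -> subI (soc_over x) c.

Let extreme_split c : Lsoc c -> extreme c ->
  forall x, Lsoc x -> subI x c \/ subI (soc_over c) x.
Proof.
move=> Lc Ec x; elim=> [|y Ly IH|F _ _ IH].
- by left => z /= ->; apply: Lsoc_0.
- case: IH => [yc|cy]; last by right => z /cy; apply: sub_soc_over.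
  case: (classic (subI c y)) => [cy|ncy]; last by left; apply: Ec.
  by right; rewrite (subI_anti yc cy).
- case: (classic (exists J, F J /\ subI (soc_over c) J)) => [[J [FJ cJ]]|nJ].
    by right => z /cJ Jz; exists J.
  left => z [J [FJ Jz]]; case: (IH J FJ) => [|cJ]; first exact.
  by case: nJ; exists J.
Qed.

Let Lsoc_extreme c : Lsoc c -> extreme c.
Proof.
elim=> [|d Ld Ed|F _ HF IH].
- by move=> x Lx _ ncx; case: ncx => z /= ->; apply: Lsoc_0.
- move=> x Lx xd ndx.
  case: (extreme_split Ld Ed Lx) => [xd'|dx]; last by case: ndx.
  case: (classic (subI d x)) => [dx|ndx'].
    by rewrite (subI_anti xd' dx).
  by move=> z /(Ed x Lx xd' ndx'); apply: sub_soc_over.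
- move=> x Lx xc ncx.
  have [d [Fd ndx]] : exists d, F d /\ ~ subI d x.
    apply: NNPP => H; apply: ncx => z [d [Fd dz]].
    by apply: NNPP => nxz; apply: H; exists d; split => // dx; apply/nxz/dx.
  case: (extreme_split (HF d Fd) (IH d Fd) Lx) => [xd|dx].
    by move=> z /(IH d Fd x Lx xd ndx) dz; exists d.
  by case: ndx => z /(@sub_soc_over d) /dx.
Qed.

Lemma Lsoc_soc_over_split c x : Lsoc c -> Lsoc x -> subI x c \/ subI (soc_over c) x.
Proof. by move=> Lc; apply: extreme_split => //; apply: Lsoc_extreme. Qed.

Lemma Lsoc_total c x : Lsoc c -> Lsoc x -> subI x c \/ subI c x.
Proof.
move=> Lc Lx; case: (Lsoc_soc_over_split Lc Lx) => [|cx]; first by left.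
by right => z /(@sub_soc_over c) /cx.
Qed.

Lemma Lsoc_ideal I : Lsoc I -> is_ideal I.
Proof.
elim=> [|J _ _|F [J FJ] HF IH].
- by split => [//|x y /= -> ->|r x /= ->]; rewrite ?addr0 ?mulr0.
- exact: soc_over_ideal.
- split; first by exists J; split => //; apply: Lsoc_0; apply: HF.
  + move=> x y [J1 [F1 x1]] [J2 [F2 y2]].
    case: (Lsoc_total (HF _ F1) (HF _ F2)) => [J21|J12].
      by exists J1; split => //; apply: (idealD (IH _ F1)) => //; apply: J21.
    by exists J2; split => //; apply: (idealD (IH _ F2)) => //; apply: J12.
  + by move=> r x [J1 [F1 x1]]; exists J1; split => //; apply: (idealMl (IH _ F1)).
Qed.

Lemma Lsoc_sub_top I0 I : Lsoc I0 -> subI (@fullI K R) (soc_over I0) ->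
  Lsoc I -> ~ subI (@fullI K R) I -> subI I I0.
Proof.
move=> LI0 topI0 LI nfI; case: (Lsoc_soc_over_split LI0 LI) => // I0I.
by case: nfI => x _; apply: I0I; apply: topI0.
Qed.

End SocleChain.

Definition kdelta (X : Type) (K : fieldType) (t0 : X) : X -> K :=
  fun t => if excluded_middle_informative (t = t0) then 1 else 0.

Lemma kdelta_id (X : Type) (K : fieldType) (t0 : X) : kdelta K t0 t0 = 1.
Proof. by rewrite /kdelta; case: excluded_middle_informative. Qed.

Lemma kdelta_neq (X : Type) (K : fieldType) (t0 t : X) : t <> t0 -> kdelta K t0 t = 0.
Proof. by rewrite /kdelta; case: excluded_middle_informative. Qed.

Lemma fin_supp_kdelta (X : Type) (K : fieldType) (t0 : X) : fin_supp (kdelta K t0).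
Proof.
exists (t0 :: nil) => t; case: (classic (t = t0)) => [-> _|nt0]; first by left.
by rewrite kdelta_neq.
Qed.

Section LayerMap.
Variables (K : fieldType) (R : comAlgType K).

Definition layer_map (I : R -> Prop) (X : Type) (phi : R -> X -> K) :=
  [/\ (forall a x y, soc_over I x -> soc_over I y ->
         phi (a *: x + y) = (fun t => a * phi x t + phi y t)),
      (forall x y, soc_over I x -> soc_over I y ->
         phi (x * y) = (fun t => phi x t * phi y t)),
      (forall x, soc_over I x -> fin_supp (phi x)),
      (forall g, fin_supp g -> exists x, soc_over I x /\ phi x = g) &
      (forall x, soc_over I x -> (phi x = (fun _ => 0) <-> I x))].

Variables (I : R -> Prop) (X : Type) (phi : R -> X -> K).
Hypotheses (HI : is_ideal I) (Hphi : layer_map I phi).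
Local Notation S := (soc_over I).
Let HS : is_ideal S := soc_over_ideal I.

Lemma phiZD a x y t : S x -> S y -> phi (a *: x + y) t = a * phi x t + phi y t.
Proof. by case: Hphi => phi_lin _ _ _ _ Sx Sy; rewrite phi_lin. Qed.

Lemma phiM x y t : S x -> S y -> phi (x * y) t = phi x t * phi y t.
Proof. by case: Hphi => _ phi_mul _ _ _ Sx Sy; rewrite phi_mul. Qed.

Lemma phi0 t : phi 0 t = 0.
Proof.
have := phiZD 1 t (ideal0 HS) (ideal0 HS); rewrite scaler0 addr0 mul1r.
by move=> /(congr1 (fun z => z - phi 0 t)); rewrite addrK subrr => <-.
Qed.

Lemma phiZ a x t : S x -> phi (a *: x) t = a * phi x t.
Proof. by move=> Sx; rewrite -[a *: x]addr0 phiZD ?phi0 ?addr0 //; apply: ideal0. Qed.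

Lemma phiB x y t : S x -> S y -> phi (x - y) t = phi x t - phi y t.
Proof. by move=> Sx Sy; rewrite addrC -scaleN1r phiZD // mulN1r addrC. Qed.

Lemma phi_kerP x : S x -> I x <-> forall t, phi x t = 0.
Proof.
case: Hphi => _ _ _ _ phi_ker Sx; rewrite -phi_ker //; split => [-> //|phix0].
exact: functional_extensionality.
Qed.

Lemma phi_kdelta t0 : exists w, S w /\ forall t, phi w t = kdelta K t0 t.
Proof.
case: Hphi => _ _ _ phi_surj _.
by case: (phi_surj _ (fin_supp_kdelta K t0)) => w [Sw phiw]; exists w; rewrite phiw.
Qed.

(* Multiplication by [r] acts on the [t]-coordinate of the layer as
   multiplication by the scalar [phi (w * r) t], because [w * x] and
   [phi x t *: w] have the same image in the layer. *)
Lemma phiMr_kdelta x r w t : S x -> S w -> (forall s, phi w s = kdelta K t s) ->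
  phi (x * r) t = phi x t * phi (w * r) t.
Proof.
move=> Sx Sw phiw; set c := phi x t.
have Sd : S (w * x - c *: w).
  by apply: (idealB HS); [apply: (idealMr HS) | apply: (idealZ HS)].
have Id : I (w * x - c *: w).
  apply/(phi_kerP Sd) => s; rewrite phiB ?phiM ?phiZ ?phiw //; last first.
  - exact: (idealZ HS).
  - exact: (idealMr HS).
  case: (classic (s = t)) => [->|nst]; first by rewrite kdelta_id mul1r mulr1 subrr.
  by rewrite kdelta_neq // mul0r mulr0 subrr.
have Sxr : S (x * r) by apply: (idealMr HS).
have Swr : S (w * r) by apply: (idealMr HS).
have /(phi_kerP (idealMr HS r Sd)) /(_ t) : I ((w * x - c *: w) * r) by apply: (idealMr HI).
rewrite mulrBl -scalerAl -mulrA (phiB t (idealMl HS w Sxr) (idealZ HS c Swr)).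
by rewrite (phiM t Sw Sxr) (phiZ c t Swr) phiw kdelta_id mul1r => /eqP; rewrite subr_eq0 => /eqP.
Qed.

(* [e] acts on the [t]-coordinate by an idempotent scalar, hence by 0 or 1. *)
Lemma phiMr_idem e t : e * e = e ->
  (forall x, S x -> phi (x * e) t = phi x t) \/ (forall x, S x -> phi (x * e) t = 0).
Proof.
move=> e_idem; case: (phi_kdelta t) => w [Sw phiw].
have Swe : S (w * e) by apply: (idealMr HS).
have phi_xe x : S x -> phi (x * e) t = phi x t * phi (w * e) t.
  by move=> Sx; apply: phiMr_kdelta.
have := phi_xe _ Swe; rewrite -mulrA e_idem => /esym/eqP.
rewrite -subr_eq0 -[X in _ - X]mulr1 -mulrBr mulf_eq0 subr_eq0.
case/orP=> /eqP c; [right | left] => x Sx; rewrite phi_xe // c ?mulr0 ?mulr1 //.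
Qed.

Lemma phi_line x y t : S x -> S y ->
  (forall s, s <> t -> phi x s = 0) -> (forall s, s <> t -> phi y s = 0) ->
  phi y t != 0 -> I (x - (phi x t / phi y t) *: y).
Proof.
move=> Sx Sy x_t y_t yt_neq0.
have Syk : S ((phi x t / phi y t) *: y) by apply: (idealZ HS).
apply/(phi_kerP (idealB HS Sx Syk)) => s; rewrite phiB ?phiZ //.
case: (classic (s = t)) => [->|nst]; first by rewrite divfK ?subrr.
by rewrite (x_t s nst) (y_t s nst) mulr0 subrr.
Qed.

End LayerMap.

Section CornerPred.
Variables (K : fieldType) (R : comAlgType K) (e : R).

Definition in_corner : pred R := [pred x | x * e == x].

Lemma in_corner_submod_closed : subsemimod_closed in_corner.
Proof.
split; first split=> [|x y]; rewrite ?inE ?mul0r //.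
- by move=> /eqP xe /eqP ye; rewrite mulrDl xe ye.
- by move=> a x /[!inE] /eqP xe; rewrite -scalerAl xe.
Qed.

HB.instance Definition _ :=
  GRing.isSubmodClosed.Build K R in_corner in_corner_submod_closed.

End CornerPred.

(* The proofs [e * e = e] and [e != 0] are parameters of the type so that its
   ring structure, with unit [e], can be found by instance inference. *)
Record corner (K : fieldType) (R : comAlgType K) (e : R)
    (e_idem : e * e = e) (e_neq0 : e != 0) :=
  Corner { cval : R; cvalP : cval \in in_corner e }.

Section CornerRing.
Variables (K : fieldType) (R : comAlgType K) (e : R).
Hypotheses (e_idem : e * e = e) (e_neq0 : e != 0).
Local Notation C := (corner e_idem e_neq0).

HB.instance Definition _ := [isSub for @cval K R e e_idem e_neq0].
HB.instance Definition _ := [Choice of C by <:].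
HB.instance Definition _ := [SubChoice_isSubLmodule of C by <:].

Lemma cvalMe (x : C) : val x * e = val x.
Proof. by case: x => x /= /[!inE] /eqP. Qed.

Lemma in_cornerMr x y : x \in in_corner e -> x * y \in in_corner e.
Proof. by rewrite !inE mulrAC => /eqP ->. Qed.

Lemma in_corner_Me x : x * e \in in_corner e.
Proof. by rewrite inE -mulrA e_idem. Qed.

Definition corner_mul (x y : C) : C := Corner e_idem e_neq0 (in_cornerMr (val y) (valP x)).
Definition corner_one : C := Corner e_idem e_neq0 (introT eqP e_idem).

Lemma corner_mulA : associative corner_mul.
Proof. by move=> x y z; apply: val_inj; rewrite /= mulrA. Qed.
Lemma corner_mulC : commutative corner_mul.
Proof. by move=> x y; apply: val_inj; rewrite /= mulrC. Qed.
Lemma corner_mul1 : left_id corner_one corner_mul.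
Proof. by move=> x; apply: val_inj; rewrite /= mulrC cvalMe. Qed.
Lemma corner_mulDl : left_distributive corner_mul +%R.
Proof. by move=> x y z; apply: val_inj; rewrite /= mulrDl. Qed.
Lemma corner_one_neq0 : corner_one != 0.
Proof. by rewrite -(inj_eq val_inj). Qed.

HB.instance Definition _ := GRing.Zmodule_isComNzRing.Build C
  corner_mulA corner_mulC corner_mul1 corner_mulDl corner_one_neq0.

Lemma corner_scaleAl (a : K) (x y : C) : a *: (x * y) = a *: x * y.
Proof. by apply: val_inj; rewrite /= scalerAl. Qed.

HB.instance Definition _ := GRing.Lmodule_isLalgebra.Build K C corner_scaleAl.
HB.instance Definition _ := GRing.Lalgebra_isComAlgebra.Build K C.

Lemma cvalD : {morph (val : C -> R) : x y / x + y}. Proof. by []. Qed.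
Lemma cvalM : {morph (val : C -> R) : x y / x * y}. Proof. by []. Qed.
Lemma cval1 : val (1 : C) = e. Proof. by []. Qed.
Lemma cvalZ a : {morph (val : C -> R) : x / a *: x}. Proof. by []. Qed.

Definition corner_proj (x : R) : C := Corner e_idem e_neq0 (in_corner_Me x).

Lemma corner_projE x : val (corner_proj x) = x * e. Proof. by []. Qed.

Lemma corner_projK : cancel val corner_proj.
Proof. by move=> y; apply: val_inj; rewrite corner_projE cvalMe. Qed.

Lemma corner_proj_is_zmod_morphism : zmod_morphism corner_proj.
Proof. by move=> x y; apply: val_inj; rewrite /= mulrBl. Qed.

Lemma corner_proj_is_monoid_morphism : monoid_morphism corner_proj.
Proof.
split=> [|x y]; apply: val_inj; rewrite /= ?mul1r //.
by rewrite mulrACA e_idem.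
Qed.

Lemma corner_proj_is_scalable : scalable corner_proj.
Proof. by move=> a x; apply: val_inj; rewrite /= -scalerAl. Qed.

HB.instance Definition _ := GRing.isZmodMorphism.Build R C corner_proj
  corner_proj_is_zmod_morphism.
HB.instance Definition _ := GRing.isMonoidMorphism.Build R C corner_proj
  corner_proj_is_monoid_morphism.
HB.instance Definition _ := GRing.isScalable.Build K R C *:%R corner_proj
  corner_proj_is_scalable.

Lemma corner_vN_regular : vN_regular R -> vN_regular C.
Proof.
move=> vNR y; case: (vNR (val y)) => z yE; exists (corner_proj z); apply: val_inj.
by rewrite !cvalM corner_projE mulrA -[_ * e * _]mulrA (mulrC e) cvalMe -yE.
Qed.

End CornerRing.

Section CornerIdeals.
Variables (K : fieldType) (R : comAlgType K) (e : R).
Hypotheses (e_idem : e * e = e) (e_neq0 : e != 0).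
Local Notation C := (corner e_idem e_neq0).
Local Notation pr := (corner_proj e_idem e_neq0).
Implicit Types (I J M : R -> Prop) (D P : C -> Prop).

Definition res I : C -> Prop := fun y => I (val y).

Definition lift D : R -> Prop := mulI (fun x => D (pr x)) e.

Lemma res_ideal I : is_ideal I -> is_ideal (res I).
Proof. exact: ideal_preim. Qed.

Lemma proj_preim_ideal D : is_ideal D -> is_ideal (fun x => D (pr x)).
Proof.
by apply: (ideal_preim (f := pr)); [exact: rmorph0 | exact: rmorphD | exact: rmorphM].
Qed.

Lemma lift_ideal D : is_ideal D -> is_ideal (lift D).
Proof. by move=> HD; apply/mulI_ideal/proj_preim_ideal. Qed.

Lemma liftP D y : D y -> lift D (val y).
Proof. by move=> Dy; exists (val y); rewrite corner_projK cvalMe. Qed.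

Lemma res_proj I x : is_ideal I -> I x -> res I (pr x).
Proof. by move=> HI Ix; apply: idealMr. Qed.

Lemma res_sumI_lift I D : is_ideal I -> is_ideal D -> subI (res I) D ->
  subI (res (sumI I (lift D))) D.
Proof.
move=> HI HD resID y [i [_ [Ii [c [Dc ->]] yE]]].
have iE : i * e = i.
  by rewrite -[i](addrK (c * e)) -yE mulrBl cvalMe -mulrA e_idem.
have -> : y = pr i + pr c by apply: val_inj; rewrite cvalD !corner_projE iE.
by apply: (idealD HD) => //; apply: resID; rewrite /res corner_projE iE.
Qed.

Lemma covers_sumI_lift I D : is_ideal I -> covers (res I) D -> covers I (sumI I (lift D)).
Proof.
move=> HI [HD resID nDI minD].
have HL := lift_ideal HD.
split; [exact: sumI_ideal | exact: sumIl | |].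
  by move=> LI; apply: nDI => d Dd; apply: LI; apply/sumIr/liftP.
move=> M HM IM MP; have resMD : subI (res M) D.
  by move=> y My; apply: (res_sumI_lift HI HD resID); apply: MP.
case: (minD (res M) (res_ideal HM) (fun y => IM (val y)) resMD) => [MI|DM].
  left => m Mm; case: (MP m Mm) => i [_ [Ii [c [Dc ->]] mE]].
  rewrite mE; apply: (idealD HI) => //; apply: (MI (pr c)).
  by rewrite /res corner_projE -[c * e](addKr i) -mE addrC; apply: (idealB HM) => //; apply: IM.
right; apply: sumI_sub => // _ [c [Dc ->]]; exact: (DM (pr c)).
Qed.

Lemma covers_res I J : is_ideal I -> covers I J ->
  subI (mulI J e) I \/ covers (res I) (res J).
Proof.
move=> HI [HJ IJ nJI minJ].
have JeJ : subI (mulI J e) J by move=> _ [c [Jc ->]]; apply: idealMr.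
case: (minJ _ (sumI_ideal HI (mulI_ideal e HJ)) (sumIl (I := I) (mulI_ideal e HJ))
            (sumI_sub HJ IJ JeJ)) => [QI|JQ].
  by left => x Jex; apply/QI/sumIr.
right; split; [exact: res_ideal | by move=> y /IJ | |].
  move=> JI; apply: nJI => x /JQ [i [_ [Ii [c [Jc ->]] ->]]].
  apply: (idealD HI) => //; apply: (JI (pr c)).
  by rewrite /res corner_projE; apply: idealMr.
move=> P HP IP PJ.
have HQ := sumI_ideal HI (lift_ideal HP).
have QJ : subI (sumI I (lift P)) J.
  by apply: sumI_sub => // _ [c [Pc ->]]; apply: (PJ (pr c)).
case: (minJ _ HQ (sumIl (I := I) (lift_ideal HP)) QJ) => [QI|JQ'].
  by left => y Py; apply/QI/sumIr/liftP.
by right => y Jy; apply: (res_sumI_lift HI HP IP); apply: JQ'.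
Qed.

Lemma res_soc_over I : is_ideal I -> res (soc_over I) = soc_over (res I).
Proof.
move=> HI; apply: pred_ext => y; split.
- move=> Sy N HN IN covN; rewrite -[y]corner_projK.
  have HM := proj_preim_ideal HN.
  apply: (Sy (fun x => N (pr x))) => // [x Ix|J covIJ x Jx].
    by apply: IN; apply: res_proj.
  case: (covers_res HI covIJ) => [JeI|covres].
    by apply/IN; rewrite /res corner_projE; apply: JeI; exists x.
  apply: (covN _ covres); rewrite /res corner_projE.
  by apply: idealMr => //; case: covIJ.
- move=> Sy M HM IM covM; apply: (Sy (res M)) => [|x Ix|D covD d Dd].
  + exact: res_ideal.
  + exact: IM.
  + by apply: (covM _ (covers_sumI_lift HI covD)); apply/sumIr/liftP.
Qed.

Lemma res_zeroI : res (@zeroI K R) = @zeroI K C.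
Proof. by apply: pred_ext => y; split => [y0|->] //; apply: val_inj. Qed.

Lemma Lsoc_res I : Lsoc I -> Lsoc (res I).
Proof.
elim=> [|J LJ IH|F [J FJ] HF IH].
- by rewrite res_zeroI; constructor.
- by rewrite res_soc_over; [constructor | apply: Lsoc_ideal].
- set G := fun D => exists J, F J /\ D = res J.
  have -> : res (fun x => exists I, F I /\ I x) = fun y => exists D, G D /\ D y.
    apply: pred_ext => y; split => [[J' [FJ' J'y]]|[_ [[J' [FJ' ->]] J'y]]].
      by exists (res J'); split => //; exists J'.
    by exists J'.
  constructor; first by exists (res J), J.
  by move=> _ [J' [FJ' ->]]; apply: IH.
Qed.

Lemma Lsoc_res_inv D : Lsoc D -> exists I, Lsoc I /\ D = res I.
Proof.
elim=> [|D' _ [I [LI ->]]|F [D0 FD0] _ IH].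
- by exists (@zeroI K R); split; [constructor | rewrite res_zeroI].
- by exists (soc_over I); split; [constructor | rewrite res_soc_over //; apply: Lsoc_ideal].
- pose G := fun I => Lsoc I /\ F (res I).
  exists (fun x => exists I, G I /\ I x); split.
    constructor; last by move=> I [].
    by case: (IH D0 FD0) => I [LI EI]; exists I; split => //; rewrite -EI.
  apply: pred_ext => y; split => [[D1 [FD1 D1y]]|[I [[LI FI] Iy]]].
    by case: (IH D1 FD1) => I [LI EI]; exists I; split; [split => //; rewrite -EI | rewrite EI in D1y].
  by exists (res I).
Qed.

End CornerIdeals.

Section IdempotentLayers.
Variables (K : fieldType) (R : comAlgType K) (e : R).
Hypothesis e_idem : e * e = e.

Section PrincipalCover.
Variables (I U : R -> Prop) (X : Type) (phi : R -> X -> K).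
Hypotheses (HI : is_ideal I) (Hphi : layer_map U phi).
Hypotheses (IU : subI I U) (UeI : forall u, U u -> I (u * e)).
Variables (t : X) (w y : R).
Hypotheses (Sw : soc_over U w) (phiw : forall s, phi w s = kdelta K t s).
Hypotheses (Sy : soc_over U y) (ye : y * e = y) (phiyt : phi y t != 0).
Let HS := soc_over_ideal U.

Let notin_U u : soc_over U u -> phi u t != 0 -> ~ U u.
Proof. by move=> Su ut_neq0 /(phi_kerP Hphi Su) /(_ t) /eqP; apply/negP. Qed.

Let phi_wMr r s : phi (w * y * r) s = kdelta K t s * phi (y * r) s.
Proof. by rewrite -mulrA (phiM Hphi) ?phiw //; apply: (idealMr HS). Qed.

(* [w * y] spans a line of the layer of [U], and [U e] lies in [I], so the
   principal ideal it generates is minimal over [I]. *)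
Lemma principal_covers : covers I (sumI I (mulI (@fullI K R) (w * y))).
Proof.
set v := w * y; have HP := mulI_ideal v (@fullI_ideal K R).
have Sv : soc_over U v by apply: (idealMl HS).
have vP : mulI (@fullI K R) v v by exists 1; rewrite mul1r.
have Ue_id u : U u -> u * e = u -> I u by move=> Uu <-; apply: UeI.
have nUv : ~ U v by apply: notin_U => //; rewrite -[v]mulr1 phi_wMr mulr1 kdelta_id mul1r.
split; [exact: sumI_ideal | exact: sumIl | by move=> /(_ v (sumIr HI vP)) /IU | ].
move=> M HM IM MP; case: (classic (subI M I)) => [|nMI]; [by left | right].
have [m [Mm nIm]] : exists m, M m /\ ~ I m.
  by apply: NNPP => nm; apply: nMI => x Mx; apply: NNPP => nIx; apply: nm; exists x.
case: (MP m Mm) => i [_ [Ii [r [_ ->]] mE]].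
suff Mv : M v by apply: sumI_sub => // _ [s [_ ->]]; apply: idealMl.
have uE : r * v = w * y * r by rewrite mulrC.
have Su : soc_over U (r * v) by apply: (idealMl HS).
have ue : r * v * e = r * v by rewrite -!mulrA ye.
have nUu : ~ U (r * v).
  by move=> /Ue_id /(_ ue) Iu; apply: nIm; rewrite mE; apply: idealD.
have u_off s : s <> t -> phi (r * v) s = 0.
  by move=> nst; rewrite uE phi_wMr kdelta_neq // mul0r.
have v_off s : s <> t -> phi v s = 0.
  by move=> nst; rewrite -[v]mulr1 phi_wMr kdelta_neq // mul0r.
have phiut : phi (r * v) t != 0.
  apply/eqP => ut0; apply/nUu/(phi_kerP Hphi Su) => s.
  by case: (classic (s = t)) => [->|/u_off].
have := phi_line Hphi Sv Su v_off u_off phiut; set k := _ / _ => Ux.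
have Ix : I (v - k *: (r * v)).
  by apply: Ue_id => //; rewrite mulrBl -scalerAl ue -mulrA ye.
rewrite -[v](subrK (k *: (r * v))); apply: (idealD HM); first exact: IM.
apply: (idealZ HM); rewrite -[r * v](addKr i) -mE addrC.
by apply: (idealB HM) => //; apply: IM.
Qed.

End PrincipalCover.

Hypothesis layers : forall I : R -> Prop, Lsoc I -> ~ subI (@fullI K R) I ->
  exists (X : Type) (_ : X), layer_iso I X.

(* [U] is the largest member of the socle sequence with [U e] inside [I]; if
   [e] were to vanish on the layer over [I], [e] would also vanish on the
   layer over [U], contradicting maximality. *)
Lemma soc_overMe_notin I : Lsoc I -> ~ I e -> exists z, soc_over I z /\ ~ I (z * e).
Proof.
move=> LI nIe; apply: NNPP => nz.
have socIe z : soc_over I z -> I (z * e) by move=> Sz; apply: NNPP => nIz; apply: nz; exists z.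
have HI := Lsoc_ideal LI.
pose F J := [/\ Lsoc J, subI I J & forall u, J u -> I (u * e)].
pose U x := exists J, F J /\ J x.
have FI : F I by split => // u Iu; apply: idealMr.
have LU : Lsoc U by constructor; [exists I | move=> J []].
have IU : subI I U by move=> x Ix; exists I.
have UeI u : U u -> I (u * e) by move=> [J [[_ _ JeI] Ju]]; apply: JeI.
have nfU : ~ subI (@fullI K R) U by move=> fU; apply: nIe; rewrite -e_idem; apply/UeI/fU.
have HS := soc_over_ideal U.
case: (layers LU nfU) => X [t0 [phi Hphi]].
suff FS : F (soc_over U).
  case: (phi_kdelta Hphi t0) => w [Sw phiw].
  have /(phi_kerP Hphi Sw) /(_ t0) : U w by exists (soc_over U).
  by rewrite phiw kdelta_id => /eqP; rewrite oner_eq0.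
split; [by constructor | by move=> x /IU /(@sub_soc_over _ _ U) |].
move=> z Sz; apply: NNPP => nIze.
have Sze : soc_over U (z * e) by apply: (idealMr HS).
have zee : z * e * e = z * e by rewrite -mulrA e_idem.
have [t phit] : exists t, phi (z * e) t <> 0.
  apply: pred_neq0 => phi0; apply: nIze; rewrite -zee; apply: UeI.
  by apply/(phi_kerP Hphi Sze) => s; rewrite phi0.
case: (phi_kdelta Hphi t) => w [Sw phiw].
have covI := principal_covers HI Hphi IU UeI Sw phiw Sze zee (introN eqP phit).
have Swze : soc_over I (w * (z * e)).
  by apply: (covers_sub_soc_over covI); apply: sumIr => //; exists 1; rewrite mul1r.
have Iwze : I (w * (z * e)) by rewrite -zee mulrA; apply: socIe.
have [_ _ nPI _] := covI; apply: nPI.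
by apply: sumI_sub => // _ [r [_ ->]]; apply: idealMl.
Qed.

End IdempotentLayers.

Section FinSupp.
Variables (K : fieldType) (X : Type) (P : X -> Prop).

Lemma fin_supp_sval (g : X -> K) : fin_supp g -> fin_supp (fun t : {t | P t} => g (sval t)).
Proof.
have sub_list (s : list X) : exists s' : list {t | P t},
    forall t, List.In (sval t) s -> List.In t s'.
  elim: s => [|a s [s' Hs']]; first by exists nil.
  case: (classic (P a)) => [pa|npa].
    exists (exist _ a pa :: s') => [[t pt]] [/= ta|/Hs']; last by right.
    by left; subst t; congr exist; apply: proof_irrelevance.
  by exists s' => [[t pt]] [/= ta|/Hs'] //; subst t.
move=> [s gs]; case: (sub_list s) => s' Hs'; exists s' => t /gs; exact: Hs'.
Qed.

Definition zero_ext (g : {t | P t} -> K) (t : X) : K :=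
  match excluded_middle_informative (P t) with
  | left pt => g (exist _ t pt)
  | right _ => 0
  end.

Lemma zero_ext_sval g t : zero_ext g (sval t) = g t.
Proof.
case: t => t pt; rewrite /zero_ext /=; case: excluded_middle_informative => [pt'|] //.
by congr g; congr exist; apply: proof_irrelevance.
Qed.

Lemma fin_supp_zero_ext g : fin_supp g -> fin_supp (zero_ext g).
Proof.
move=> [s gs]; exists (List.map sval s) => t; rewrite /zero_ext.
case: excluded_middle_informative => [pt /gs|//].
exact: (List.in_map sval s (exist _ t pt)).
Qed.

End FinSupp.

Lemma fin_supp_finType (K : fieldType) (X : finType) (g : X -> K) : fin_supp g.
Proof.
exists (enum X) => t _; have : t \in enum X by rewrite mem_enum.
by elim: (enum X) => // a s IH; rewrite in_cons => /orP [/eqP ->|/IH]; [left | right].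
Qed.

Section CornerLoewy.
Variables (K : fieldType) (R : comAlgType K) (e : R).
Hypotheses (e_idem : e * e = e) (e_neq0 : e != 0).
Hypothesis layers : forall I : R -> Prop, Lsoc I -> ~ subI (@fullI K R) I ->
  exists (X : Type) (_ : X), layer_iso I X.
Variable I0 : R -> Prop.
Hypotheses (LI0 : Lsoc I0) (topI0 : subI (@fullI K R) (soc_over I0)) (nI0e : ~ I0 e).
Local Notation C := (corner e_idem e_neq0).
Local Notation pr := (corner_proj e_idem e_neq0).
Local Notation res := (@res K R e e_idem e_neq0).

Let notin_Lsoc I : Lsoc I -> ~ subI (@fullI K R) I -> ~ I e.
Proof. by move=> LI nfI /(Lsoc_sub_top LI0 topI0 LI nfI). Qed.

Lemma proper_res I : ~ subI (@fullI K C) (res I) -> ~ subI (@fullI K R) I.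
Proof. by move=> nfres fI; apply: nfres => y _; apply: fI. Qed.

(* The layer of [R e] over [res I] is the part of the layer of [R] over [I]
   on which [e] acts as the identity; it is nonzero since [e] does not
   vanish on the layer. *)
Lemma corner_layer_iso D : Lsoc D -> ~ subI (@fullI K C) D ->
  exists (X : Type) (_ : X), layer_iso D X.
Proof.
move=> LD; case: (Lsoc_res_inv LD) => I [LI ->] /proper_res nfI.
have HI := Lsoc_ideal LI; have HS := soc_over_ideal I.
case: (layers LI nfI) => X [_ [phi Hphi]].
pose P t := forall x, soc_over I x -> phi (x * e) t = phi x t.
have phi_notP t : ~ P t -> forall x, soc_over I x -> phi (x * e) t = 0.
  by case: (phiMr_idem HI Hphi t e_idem).
have [t1 Pt1] : exists t, P t.
  case: (soc_overMe_notin e_idem layers LI (notin_Lsoc LI nfI)) => z [Sz nIze].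
  have Sze : soc_over I (z * e) by apply: (idealMr HS).
  apply: NNPP => nP; apply/nIze/(phi_kerP Hphi Sze) => t.
  have nPt : ~ P t by move=> Pt; apply: nP; exists t.
  by rewrite -(phi_notP t nPt _ Sze) -mulrA e_idem.
have [_ _ phi_fin phi_surj _] := Hphi.
exists {t | P t}, (exist _ t1 Pt1), (fun y t => phi (val y) (sval t)).
rewrite -res_soc_over //; split.
- move=> a x y Sx Sy; apply: functional_extensionality => t.
  by rewrite cvalD cvalZ (phiZD Hphi).
- move=> x y Sx Sy; apply: functional_extensionality => t.
  by rewrite cvalM (phiM Hphi).
- by move=> y /phi_fin; apply: fin_supp_sval.
- move=> g /fin_supp_zero_ext /phi_surj [x [Sx phix]].
  exists (pr x); split; first by rewrite /res corner_projE; apply: (idealMr HS).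
  apply: functional_extensionality => t.
  by rewrite corner_projE (proj2_sig t x Sx) phix zero_ext_sval.
- move=> y Sy; split => [phiy0|Iy]; last first.
    by apply: functional_extensionality => t; apply: (proj1 (phi_kerP Hphi Sy) Iy).
  apply/(phi_kerP Hphi Sy) => t; case: (classic (P t)) => [Pt|nPt].
    exact: (congr1 (fun f => f (exist _ t Pt)) phiy0).
  by rewrite -cvalMe (phi_notP t nPt).
Qed.

Lemma res_subI_reflect I J : Lsoc I -> Lsoc J -> subI (res I) (res J) -> subI I J.
Proof.
move=> LI LJ resIJ; apply: NNPP => nIJ.
have nfJ : ~ subI (@fullI K R) J by move=> fJ; apply: nIJ => x _; apply: fJ.
case: (Lsoc_soc_over_split LJ LI) => [//|socJI].
case: (soc_overMe_notin e_idem layers LJ (notin_Lsoc LJ nfJ)) => z [Sz nJze].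
by apply/nJze/(resIJ (pr z))/socJI; apply: (idealMr (soc_over_ideal J)).
Qed.

Lemma corner_same_loewy : same_loewy R C.
Proof.
exists res; split => [I|D /Lsoc_res_inv [I [LI ->]]|I J LI LJ].
- exact: Lsoc_res.
- by exists I.
- by split => [IJ y /IJ|]; [| apply: res_subI_reflect].
Qed.

Let top_res : [/\ Lsoc (res I0), ~ subI (@fullI K C) (res I0)
                 & subI (@fullI K C) (soc_over (res I0))].
Proof.
split; [exact: Lsoc_res | by move=> /(_ 1 I) | ].
by rewrite -res_soc_over; [move=> y _; apply: topI0 | apply: Lsoc_ideal].
Qed.

Lemma corner_in_RK : vN_regular R -> in_RK C.
Proof.
move=> vNR; split; [exact: corner_vN_regular | by exists (res I0); apply: top_res |].
exact: corner_layer_iso.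
Qed.

Lemma corner_top_dim1 n (phi : R -> 'I_n -> K) (i0 : 'I_n) :
  layer_map I0 phi -> (forall s, phi e s = (s == i0)%:R) -> top_dim C 1.
Proof.
move=> Hphi phie; have [LI0' nfI0' topI0'] := top_res.
have S0 x : soc_over I0 x by apply: topI0.
exists (res I0); split => //; exists (fun y _ => phi (val y) i0).
have [phi_lin phi_mul _ _ _] := Hphi.
split.
- by move=> a x y _ _; apply: functional_extensionality => _; rewrite cvalD cvalZ phi_lin.
- by move=> x y _ _; apply: functional_extensionality => _; rewrite cvalM phi_mul.
- by move=> x _; exists (ord0 :: nil) => t _; left; rewrite (ord1 t).
- move=> g _; exists (g ord0 *: 1); split; first exact: topI0'.
  apply: functional_extensionality => t.
  by rewrite (ord1 t) cvalZ cval1 (phiZ Hphi) // phie eqxx mulr1.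
- move=> y _; split => [phiy0|Iy]; last first.
    by apply: functional_extensionality => _; apply: (proj1 (phi_kerP Hphi (S0 _)) Iy).
  apply/(phi_kerP Hphi (S0 _)) => s; rewrite -cvalMe (phiM Hphi) // phie.
  case: (eqVneq s i0) => [->|_]; last by rewrite mulr0.
  by rewrite mulr1; apply: (congr1 (fun f => f ord0) phiy0).
Qed.

End CornerLoewy.

Section OrthogonalIdempotents.
Variables (R : comRingType) (h : nat -> R).
Hypothesis h_idem : forall k, h k * h k = h k.

Definition prod_compl k := \prod_(0 <= j < k) (1 - h j).

Definition orthogonalize k := h k * prod_compl k.

Lemma prod_complS k : prod_compl k.+1 = prod_compl k * (1 - h k).
Proof. exact: big_nat_recr. Qed.

Lemma prod_compl_idem k : prod_compl k * prod_compl k = prod_compl k.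
Proof.
apply: (big_ind (fun x => x * x = x)) => [|x y xx yy|j _]; first by rewrite mulr1.
  by rewrite mulrACA xx yy.
by rewrite mulrBl mul1r mulrBr mulr1 h_idem subrr subr0.
Qed.

Lemma orthogonalize_idem k : orthogonalize k * orthogonalize k = orthogonalize k.
Proof. by rewrite /orthogonalize mulrACA h_idem prod_compl_idem. Qed.

Lemma orthogonalize_orth i j : (i < j)%N -> orthogonalize i * orthogonalize j = 0.
Proof.
move=> lt_ij; rewrite /orthogonalize /prod_compl.
rewrite [X in _ * (_ * X)](big_cat_nat (n := i)) ?(ltnW lt_ij) //.
rewrite [X in _ * (_ * (_ * X))]big_ltn //=.
set P := \prod_(0 <= l < i) _; set Q := \prod_(i.+1 <= l < j) _.
have -> : h i * P * (h j * (P * ((1 - h i) * Q))) = h i * (1 - h i) * (P * P * h j * Q).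
  by ring.
by rewrite mulrBr mulr1 h_idem subrr mul0r.
Qed.

Lemma sum_orthogonalize m : \sum_(i < m) orthogonalize i = 1 - prod_compl m.
Proof.
elim: m => [|m IHm]; first by rewrite big_ord0 /prod_compl big_geq ?subrr.
by rewrite big_ord_recr /= IHm prod_complS /orthogonalize; ring.
Qed.

End OrthogonalIdempotents.

Section LiftIdempotents.
Variables (K : fieldType) (R : comAlgType K) (n : nat) (phi : R -> 'I_n -> K).
Hypotheses (n_gt0 : (0 < n)%N) (vNR : vN_regular R).
Hypotheses (phiM : forall x y s, phi (x * y) s = phi x s * phi y s)
  (phiB : forall x y s, phi (x - y) s = phi x s - phi y s)
  (phi1 : forall s, phi 1 s = 1) (phi_surj : forall g, exists x, phi x = g).

Lemma lift_kdelta_idem (k : nat) :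
  exists f, f * f = f /\ forall s : 'I_n, phi f s = (s == k :> nat)%:R.
Proof.
case: (phi_surj (fun s => (s == k :> nat)%:R)) => x phix; case: (vNR x) => y xE.
exists (x * y); split => [|s]; first by rewrite mulrA -xE.
have := congr1 (phi^~ s) xE; rewrite /= !phiM phix => aE.
have a_idem : (s == k :> nat)%:R * (s == k :> nat)%:R = (s == k :> nat)%:R :> K.
  by case: (_ == _); rewrite ?mulr0 ?mulr1.
by rewrite {2}aE -{1}a_idem mulrAC.
Qed.

(* The last idempotent is replaced by [1], so that the orthogonalized family
   sums to [1]. *)
Lemma lift_idempotents : exists e : 'I_n -> R,
  [/\ forall i, e i * e i = e i, forall i j, i != j -> e i * e j = 0,
      \sum_i e i = 1 & forall i s, phi (e i) s = (s == i)%:R].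
Proof.
have [f fP] := choice _ lift_kdelta_idem.
pose h k := if k == n.-1 then 1 else f k.
have h_idem k : h k * h k = h k by rewrite /h; case: eqP => _; [rewrite mulr1 | case: (fP k)].
have phi_prod k s : (k <= n.-1)%N -> phi (prod_compl h k) s = (k <= s)%:R.
  elim: k => [_|k IHk lt_kn]; first by rewrite /prod_compl big_geq.
  rewrite prod_complS phiM IHk ?(ltnW lt_kn) // phiB phi1 /h (ltn_eqF lt_kn) (fP k).2.
  by case: (ltngtP k s) => _; rewrite ?subr0 ?mulr1 ?mul0r ?subrr ?mulr0.
have phi_e (i s : 'I_n) : phi (orthogonalize h i) s = (s == i)%:R.
  rewrite /orthogonalize phiM phi_prod; last by rewrite -ltnS prednK.
  rewrite /h; case: eqP => [iE|_]; last first.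
    rewrite (fP i).2; case: (eqVneq s i) => [->|ne]; first by rewrite !eqxx leqnn mulr1.
    by rewrite -[(s == i :> nat)]/(s == i) (negbTE ne) mul0r.
  rewrite phi1 mul1r; suff -> : (i <= s)%N = (s == i) by [].
  apply/idP/eqP => [le_is|->]; last exact: leqnn.
  by apply: val_inj; apply/eqP; rewrite eqn_leq le_is andbT /= iE -ltnS prednK.
exists (orthogonalize h); split => // [i|i j neq_ij|].
- exact: orthogonalize_idem.
- case: (ltngtP i j) => [lt_ij|lt_ji|/val_inj eq_ij]; last by rewrite eq_ij eqxx in neq_ij.
    exact: orthogonalize_orth.
  by rewrite mulrC; apply: orthogonalize_orth.
- rewrite (sum_orthogonalize h n) -(prednK n_gt0) prod_complS.
  by rewrite /h eqxx subrr mulr0 subr0.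
Qed.

End LiftIdempotents.

Lemma corner_prod_bij (K : fieldType) (R : comAlgType K) (n : nat) (e : 'I_n -> R)
    (e_idem : forall i, e i * e i = e i) (e_neq0 : forall i, e i != 0) :
  (forall i j, i != j -> e i * e j = 0) -> \sum_i e i = 1 ->
  bijective (fun x : R => (fun i => corner_proj (e_idem i) (e_neq0 i) x)
                          : forall i, corner (e_idem i) (e_neq0 i)).
Proof.
move=> e_orth e_sum; exists (fun y => \sum_i cval (y i)) => [x|y].
  by rewrite -[RHS]mulr1 -e_sum mulr_sumr; apply: eq_bigr => i _.
apply: functional_extensionality_dep => i; apply: val_inj.
rewrite corner_projE mulr_suml (bigD1 i) //= cvalMe big1 ?addr0 // => j neq_ji.
by rewrite -(cvalMe (y j)) -mulrA e_orth ?mulr0.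
Qed.

Lemma top_layer_idempotents (K : fieldType) (R : comAlgType K) (n : nat)
    (I0 : R -> Prop) (phi : R -> 'I_n -> K) :
  vN_regular R -> ~ subI (@fullI K R) I0 -> subI (@fullI K R) (soc_over I0) ->
  layer_map I0 phi ->
  exists e : 'I_n -> R,
    [/\ forall i, e i * e i = e i, forall i j, i != j -> e i * e j = 0,
        \sum_i e i = 1 & forall i s, phi (e i) s = (s == i)%:R].
Proof.
move=> vNR nfI0 topI0 Hphi; have S0 x : soc_over I0 x by apply: topI0.
have phiM x y s : phi (x * y) s = phi x s * phi y s by apply: (phiM Hphi).
have phiB x y s : phi (x - y) s = phi x s - phi y s by apply: (phiB Hphi).
have phi_surj g : exists x, phi x = g.
  have [_ _ _ surj _] := Hphi.
  by have [x [_ <-]] := surj g (fin_supp_finType g); exists x.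
have phi1 s : phi 1 s = 1.
  by have [x1 phix1] := phi_surj (fun _ => 1); have := phiM 1 x1 s; rewrite mul1r phix1 mulr1.
apply: lift_idempotents => //.
(* For [n = 0] every [phi x] is the empty function, so [I0] would be all of [R]. *)
case: n phi Hphi {phiM phiB phi_surj phi1} => // phi.
move=> [_ _ _ _ phi_ker]; case: nfI0 => x _; apply/(phi_ker x (S0 x)).
by apply: functional_extensionality => -[].
Qed.

Theorem lemma3p9 (K : fieldType) (R : comAlgType K) (n : nat) :
  in_RK R -> top_dim R n ->
  exists (Ri : 'I_n -> comAlgType K) (f : forall i, {lrmorphism R -> Ri i}),
    bijective (fun x : R => (fun i => f i x) : forall i, Ri i) /\
    (forall i, [/\ in_RK (Ri i), same_loewy R (Ri i) & top_dim (Ri i) 1]).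
Proof.
move=> [vNR _ layers] [I0 [LI0 nfI0 topI0 [phi Hphi]]].
have [e [e_idem e_orth e_sum phie]] := top_layer_idempotents vNR nfI0 topI0 Hphi.
have phi_ee i : phi (e i) i = 1 by rewrite phie eqxx.
have e_neq0 i : e i != 0.
  by apply/eqP => ei0; have := phi_ee i; rewrite ei0 (phi0 Hphi) => /eqP; rewrite eq_sym oner_eq0.
have nI0e i : ~ I0 (e i).
  by move=> /(phi_kerP Hphi (topI0 _ I)) /(_ i) /eqP; rewrite phi_ee oner_eq0.
exists (fun i => corner (e_idem i) (e_neq0 i) : comAlgType K).
exists (fun i => corner_proj (e_idem i) (e_neq0 i) : {lrmorphism _ -> _}).
split; first exact: corner_prod_bij.
move=> i; split.
- exact: (corner_in_RK _ _ layers LI0 topI0 (nI0e i) vNR).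
- exact: (corner_same_loewy _ _ layers LI0 topI0 (nI0e i)).
- exact: (corner_top_dim1 _ _ LI0 topI0 (nI0e i) Hphi (phie i)).
Qed.
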